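(* Let $\Lambda$ be a block and $\lambda\in\Lambda$. (i) The number of weights $\mu$ with $\mu\supset\lambda$ is $2^{\mathrm{def}(\lambda)}$. (ii) The number of weights $\mu$ with $\mu\subset\lambda$ is finite if and only if $\mathrm{def}(\Lambda)<\infty$. (iii) For each $j\in\mathbb Z$, the number of weights $\mu$ with $\mu\subset\lambda$ and $\deg(\underline\mu\lambda)=j$ is finite.
   Context: A number line carries vertices indexed by consecutive integers (finitely or infinitely many). A weight labels each vertex by $\circ,\times,\vee,\wedge$ such that outside a finite set no $\vee$ is left of an $\wedge$. $\lambda\sim\mu$ if $\mu$ is obtained from $\lambda$ by permuting $\vee$'s and $\wedge$'s; equivalence classes are blocks. A cup diagram consists of finitely many non-crossing cups joining pairs of vertices and rays down to infinity. $c\lambda$ is an oriented cup diagram if free vertices are $\circ/\times$, each cup has one $\vee$ and one $\wedge$ end, ray vertices are $\vee/\wedge$, and no two rays are labelled $\vee,\wedge$ in that order left to right; its degree is its number of clockwise cups (left end labelled $\wedge$). $\underline\lambda$ is the unique cup diagram with $\underline\lambda\lambda$ oriented of degree $0$. $\mu\subset\lambda$ (also written $\lambda\supset\mu$) means $\mu\sim\lambda$ and $\underline\mu\lambda$ is oriented. $\mathrm{def}(\lambda)$ is the number of cups of $\underline\lambda$, and $\mathrm{def}(\Lambda)=\sup_{\lambda\in\Lambda}\mathrm{def}(\lambda)\in\{0,1,2,\dots\}\cup\{\infty\}$. *)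

From Stdlib Require Import ZArith List ClassicalEpsilon.
Import ListNotations.
Open Scope Z_scope.

Inductive lab := Circ | Cross | Vee | Wedge.

Definition number_line (I : Z -> Prop) : Prop :=
  forall i j k, i <= j <= k -> I i -> I k -> I j.

(* A weight on the number line I.  Positions outside I carry the dummy
   label Circ, so that a weight is a single canonical function Z -> lab. *)
Definition is_weight (I : Z -> Prop) (la : Z -> lab) : Prop :=
  (forall i, ~ I i -> la i = Circ) /\
  exists F : list Z, forall i j, i < j -> ~ In i F -> ~ In j F ->
    ~ (la i = Vee /\ la j = Wedge).

Definition is_vw (x : lab) : Prop := x = Vee \/ x = Wedge.

Definition sim (la mu : Z -> lab) : Prop :=
  exists sigma tau : Z -> Z,
    (forall i, sigma (tau i) = i /\ tau (sigma i) = i) /\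
    (exists s : list Z, forall i, ~ In i s -> sigma i = i) /\
    (forall i, sigma i <> i -> is_vw (la i)) /\
    (forall i, mu i = la (sigma i)).

Record cupdiag := CupDiag { cups : list (Z * Z); ray : Z -> Prop }.

Definition endpoints (c : cupdiag) : list Z :=
  flat_map (fun p => [fst p; snd p]) (cups c).

Definition is_cupdiag (I : Z -> Prop) (c : cupdiag) : Prop :=
  (forall p, In p (cups c) -> fst p < snd p /\ I (fst p) /\ I (snd p)) /\
  NoDup (endpoints c) /\
  (forall p q, In p (cups c) -> In q (cups c) ->
     ~ (fst p < fst q < snd p /\ snd p < snd q)) /\
  (forall k, ray c k ->
     I k /\ ~ In k (endpoints c) /\
     forall p, In p (cups c) -> ~ (fst p < k < snd p)).

Definition oriented (c : cupdiag) (la : Z -> lab) : Prop :=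
  (forall k, ~ In k (endpoints c) -> ~ ray c k -> la k = Circ \/ la k = Cross) /\
  (forall p, In p (cups c) ->
     (la (fst p) = Vee /\ la (snd p) = Wedge) \/
     (la (fst p) = Wedge /\ la (snd p) = Vee)) /\
  (forall k, ray c k -> is_vw (la k)) /\
  (forall k l, k < l -> ray c k -> ray c l -> ~ (la k = Vee /\ la l = Wedge)).

Definition is_wedgeb (x : lab) : bool := match x with Wedge => true | _ => false end.

(* Degree of c la: number of clockwise cups (left end labelled ∧). *)
Definition degree (c : cupdiag) (la : Z -> lab) : nat :=
  length (filter (fun p => is_wedgeb (la (fst p))) (cups c)).

Definition is_underline (I : Z -> Prop) (la : Z -> lab) (c : cupdiag) : Prop :=
  is_cupdiag I c /\ oriented c la /\ degree c la = 0%nat.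

(* mu ⊂ la  (equivalently la ⊃ mu). *)
Definition subw (I : Z -> Prop) (mu la : Z -> lab) : Prop :=
  sim mu la /\ exists c, is_underline I mu c /\ oriented c la.

Definition defect (I : Z -> Prop) (la : Z -> lab) : nat :=
  epsilon (inhabits 0%nat)
    (fun n => exists c, is_underline I la c /\ length (cups c) = n).

(* def(Λ) < ∞ for the block Λ of la. *)
Definition block_defect_finite (I : Z -> Prop) (la : Z -> lab) : Prop :=
  exists N : nat, forall mu, is_weight I mu -> sim la mu -> (defect I mu <= N)%nat.

Definition finite_set {X : Type} (P : X -> Prop) : Prop :=
  exists l : list X, forall x, P x -> In x l.

Definition has_card {X : Type} (P : X -> Prop) (n : nat) : Prop :=
  exists l : list X, NoDup l /\ (forall x, P x <-> In x l) /\ length l = n.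

(* Equivalent weights have the same number of ∨'s on any large enough window.
   If both orient the same cup diagram, every cup carries exactly one ∨, so
   they have equally many ∨-rays; as the rays read ∧…∧∨…∨, they agree on the
   rays.  So a weight above λ agrees with λ off the cups of the underline of
   λ, and may orient each of those cups either way: 2^def(λ) choices.

   A weight μ below λ differs from λ only at the ends of the cups of the
   underline of μ that λ orients clockwise.  Such a cup contains no ray, so it
   encloses at most 2 def(μ) labelled vertices, and the closed interval it
   spans contains a vertex of the finite exceptional set of λ or the leftmost
   ∨ of λ outside that set.  Hence bounding def(μ) confines μ to finitely many
   weights; for (iii) the bound is the degree plus the size of the exceptional
   set, since an anticlockwise cup is an ∨ left of an ∧ in λ.  Conversely, if
   def(Λ) is infinite, counting ∨'s and ∧'s shows that the underline of λ has
   arbitrarily many ∧-rays and ∨-rays, and closing k neighbouring pairs of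
   them into cups produces weights below λ of every degree k. *)

From Stdlib Require Import ZArith List Permutation Lia ClassicalEpsilon
  FunctionalExtensionality Classical.
Import ListNotations.
Open Scope Z_scope.

Definition decide (P : Prop) : bool :=
  if excluded_middle_informative P then true else false.

Lemma decideP (P : Prop) : reflect P (decide P).
Proof. unfold decide; destruct excluded_middle_informative; constructor; auto. Qed.

Definition pcount {A} (P : A -> Prop) (l : list A) : nat :=
  length (filter (fun x => decide (P x)) l).

Section Counting.
Context {A : Type}.
Implicit Types (P Q : A -> Prop) (l : list A).

Lemma pcount_cons P x l :
  pcount P (x :: l) = ((if decide (P x) then 1 else 0) + pcount P l)%nat.
Proof. unfold pcount; simpl; destruct (decide (P x)); reflexivity. Qed.

Lemma pcount_perm P l l' : Permutation l l' -> pcount P l = pcount P l'.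
Proof.
  induction 1; rewrite ?pcount_cons; lia.
Qed.

Lemma pcount_le P Q l : (forall x, In x l -> P x -> Q x) -> (pcount P l <= pcount Q l)%nat.
Proof.
  induction l as [|a l IH]; intros H; [apply le_n|]. rewrite !pcount_cons.
  specialize (IH (fun x Hx => H x (or_intror Hx))).
  destruct (decideP (P a)), (decideP (Q a)); try lia.
  exfalso; eauto using in_eq.
Qed.

Lemma pcount_ext P Q l : (forall x, In x l -> (P x <-> Q x)) -> pcount P l = pcount Q l.
Proof. intros H; apply Nat.le_antisymm; apply pcount_le; intros x Hx; apply H; auto. Qed.

Lemma pcount_lt P Q l : (forall x, In x l -> P x -> Q x) ->
  (exists x, In x l /\ Q x /\ ~ P x) -> (pcount P l < pcount Q l)%nat.
Proof.
  induction l as [|a l IH]; intros H [x [Hx [HQ HP]]]; [destruct Hx|].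
  rewrite !pcount_cons. destruct Hx as [<-|Hx].
  - assert (pcount P l <= pcount Q l)%nat by (apply pcount_le; auto using in_cons).
    destruct (decideP (P a)), (decideP (Q a)); tauto || lia.
  - assert (pcount P l < pcount Q l)%nat by (apply IH; eauto using in_cons).
    destruct (decideP (P a)), (decideP (Q a)); try lia.
    exfalso; eauto using in_eq.
Qed.

Lemma pcount_split P Q l :
  pcount P l = (pcount (fun x => P x /\ Q x) l + pcount (fun x => P x /\ ~ Q x) l)%nat.
Proof.
  induction l as [|a l IH]; [reflexivity|]. rewrite !pcount_cons, IH.
  destruct (decideP (P a)), (decideP (P a /\ Q a)), (decideP (P a /\ ~ Q a)); tauto || lia.
Qed.

Lemma pcount_filter P Q l :
  pcount (fun x => P x /\ Q x) l = pcount P (filter (fun x => decide (Q x)) l).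
Proof.
  induction l as [|a l IH]; [reflexivity|]. simpl.
  destruct (decideP (Q a)); rewrite ?pcount_cons, IH;
  destruct (decideP (P a /\ Q a)), (decideP (P a)); tauto || lia.
Qed.

Lemma NoDup_length_le_pcount P L l : NoDup L -> (forall x, In x L -> In x l /\ P x) ->
  (length L <= pcount P l)%nat.
Proof.
  intros HL H. apply NoDup_incl_length; auto. intros x Hx.
  apply filter_In. destruct (H x Hx). split; auto. destruct (decideP (P x)); tauto.
Qed.

Lemma pcount_le_length P l L : NoDup l -> (forall x, In x l -> P x -> In x L) ->
  (pcount P l <= length L)%nat.
Proof.
  intros Hl H. apply NoDup_incl_length; [now apply NoDup_filter|].
  intros x Hx. apply filter_In in Hx as [Hx Hp]. destruct (decideP (P x)); [auto|discriminate].
Qed.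

End Counting.

Lemma pcount_map {A B} (P : B -> Prop) (f : A -> B) l :
  pcount P (map f l) = pcount (fun x => P (f x)) l.
Proof. induction l; simpl; rewrite ?pcount_cons; auto. Qed.

Lemma pigeonhole_Z (A B : list Z) : NoDup A -> (length B < length A)%nat ->
  exists a, In a A /\ ~ In a B.
Proof.
  intros ND L. apply NNPP; intro N.
  assert (incl A B) by (intros x Hx; apply NNPP; eauto).
  assert (H' := NoDup_incl_length ND H). lia.
Qed.

Definition swap_labels (a b : Z) (m : Z -> lab) : Z -> lab :=
  fun k => if Z.eq_dec k a then m b else if Z.eq_dec k b then m a else m k.

Definition update (m : Z -> lab) (x : Z) (v : lab) : Z -> lab :=
  fun k => if Z.eq_dec k x then v else m k.

Lemma swap_labels_l a b m : swap_labels a b m a = m b.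
Proof. unfold swap_labels; destruct Z.eq_dec; congruence. Qed.

Lemma swap_labels_r a b m : swap_labels a b m b = m a.
Proof. unfold swap_labels; repeat destruct Z.eq_dec; congruence. Qed.

Lemma swap_labels_other a b m k : k <> a -> k <> b -> swap_labels a b m k = m k.
Proof. unfold swap_labels; repeat destruct Z.eq_dec; congruence. Qed.

Lemma swap_labels_involutive a b m : swap_labels a b (swap_labels a b m) = m.
Proof.
  apply functional_extensionality; intro k; unfold swap_labels.
  repeat destruct Z.eq_dec; congruence.
Qed.

Definition cup_ends (cs : list (Z * Z)) : list Z := flat_map (fun p => [fst p; snd p]) cs.

Lemma In_cup_ends x cs : In x (cup_ends cs) <-> exists p, In p cs /\ (x = fst p \/ x = snd p).
Proof.
  unfold cup_ends. rewrite in_flat_map.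
  split; intros [p [H1 H2]]; exists p; simpl in *; intuition.
Qed.

Lemma In_endpoints x c : In x (endpoints c) <-> exists p, In p (cups c) /\ (x = fst p \/ x = snd p).
Proof. exact (In_cup_ends x (cups c)). Qed.

Lemma cup_ends_length cs : length (cup_ends cs) = (2 * length cs)%nat.
Proof. induction cs; simpl; [|rewrite IHcs]; lia. Qed.

Lemma cup_eq_of_common_end cs p q : NoDup (cup_ends cs) -> In p cs -> In q cs ->
  (fst p = fst q \/ snd p = snd q \/ fst p = snd q \/ snd p = fst q) -> p = q.
Proof.
  induction cs as [|a cs IH]; intros ND Hp Hq E; [destruct Hp|]. simpl in ND.
  inversion ND as [|? ? N1 ND1]; subst. inversion ND1 as [|? ? N2 ND2]; subst.
  assert (Hin : forall r, In r cs -> In (fst r) (cup_ends cs) /\ In (snd r) (cup_ends cs))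
    by (intros r Hr; split; apply In_cup_ends; exists r; auto).
  destruct Hp as [<-|Hp]; destruct Hq as [<-|Hq]; auto; exfalso.
  - destruct (Hin q Hq); simpl in N1, N2.
    destruct E as [E|[E|[E|E]]]; rewrite ?E in N1; rewrite ?E in N2; tauto.
  - destruct (Hin p Hp); simpl in N1, N2.
    destruct E as [E|[E|[E|E]]]; rewrite <- ?E in N1; rewrite <- ?E in N2; tauto.
Qed.

Lemma NoDup_cup_ends_filter f cs : NoDup (cup_ends cs) -> NoDup (cup_ends (filter f cs)).
Proof.
  induction cs as [|a cs IH]; simpl; auto. intros ND.
  inversion ND as [|? ? N1 ND1]; subst. inversion ND1 as [|? ? N2 ND2]; subst.
  assert (Hsub : forall x, In x (cup_ends (filter f cs)) -> In x (cup_ends cs)).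
  { intros x Hx. apply In_cup_ends in Hx as [p [Hp Hx]]. apply filter_In in Hp.
    apply In_cup_ends; exists p; tauto. }
  destruct (f a); simpl; auto. constructor; [|constructor]; auto.
  intros [H|H]; apply N1; simpl; auto.
Qed.

Lemma NoDup_of_cup_ends cs : NoDup (cup_ends cs) -> NoDup cs.
Proof.
  induction cs as [|a cs IH]; simpl; intros ND; constructor.
  - intro H. inversion ND; subst. apply H2. right. apply In_cup_ends. exists a; auto.
  - apply IH. inversion ND; subst. inversion H2; subst. auto.
Qed.

Lemma NoDup_map_cup_end (g : Z * Z -> Z) cs : NoDup (cup_ends cs) ->
  (forall p, In p cs -> g p = fst p \/ g p = snd p) -> NoDup (map g cs).
Proof.
  induction cs as [|p cs IH]; intros ND H; simpl; [constructor|].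
  simpl in ND. inversion ND as [|? ? N1 ND1]; subst. inversion ND1 as [|? ? N2 ND2]; subst.
  constructor; [|apply IH; auto using in_cons].
  intro Hin. apply in_map_iff in Hin as [q [Eq Hq]].
  assert (Hg : In (g q) (cup_ends cs)) by (apply In_cup_ends; eauto using in_cons).
  rewrite Eq in Hg. destruct (H p (in_eq _ _)) as [E|E]; rewrite E in Hg; simpl in N1; tauto.
Qed.

(** * Equivalent weights *)

Lemma sim_refl m : sim m m.
Proof.
  exists (fun i => i), (fun i => i). repeat split; auto.
  - exists []; auto.
  - intros i H; congruence.
Qed.

Lemma sim_sym a b : sim a b -> sim b a.
Proof.
  intros [s [t [Hst [[l Hl] [Hv Hb]]]]].
  assert (Hts : forall i, t i <> i -> s i <> i).
  { intros i Hi E. apply Hi. rewrite <- E at 1. apply Hst. }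
  exists t, s. repeat split; try apply Hst.
  - exists l. intros i Hi. rewrite <- (Hl i Hi) at 1. apply Hst.
  - intros i Hi. rewrite Hb. apply Hv. intro E. apply (Hts i Hi).
    assert (E2 := f_equal t E). now rewrite !(proj2 (Hst _)) in E2.
  - intros i. rewrite Hb, (proj1 (Hst i)). reflexivity.
Qed.

Lemma sim_not_vw a b x : sim a b -> ~ is_vw (a x) -> b x = a x.
Proof.
  intros [s [t [Hst [_ [Hv Hb]]]]] H. rewrite Hb.
  destruct (Z.eq_dec (s x) x) as [E|E]; [now rewrite E|]. exfalso; auto.
Qed.

Lemma sim_swap_l a b r s : sim a b -> is_vw (a r) -> is_vw (a s) -> sim (swap_labels r s a) b.
Proof.
  intros [sg [t [Hst [[l Hl] [Hv Hb]]]]] Hr Hs.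
  set (tau := fun k => if Z.eq_dec k r then s else if Z.eq_dec k s then r else k).
  assert (Htt : forall k, tau (tau k) = k)
    by (intro k; unfold tau; repeat destruct Z.eq_dec; congruence).
  assert (Hsw : forall k, swap_labels r s a k = a (tau k))
    by (intro k; unfold swap_labels, tau; repeat destruct Z.eq_dec; congruence).
  exists (fun i => tau (sg i)), (fun i => t (tau i)). repeat split.
  - rewrite (proj1 (Hst _)). apply Htt.
  - rewrite Htt. apply Hst.
  - exists (r :: s :: l). intros i Hi. simpl in Hi. rewrite Hl by tauto.
    unfold tau; repeat destruct Z.eq_dec; subst; tauto || reflexivity.
  - intros i Hi. rewrite Hsw.
    destruct (Z.eq_dec (sg i) i) as [E|E].
    + rewrite E in Hi. unfold tau in *. repeat destruct Z.eq_dec; subst; congruence || auto.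
    + specialize (Hv i E). unfold tau. repeat destruct Z.eq_dec; subst; auto.
  - intros i. rewrite Hb, Hsw, Htt. auto.
Qed.

Lemma sim_swap_r a b r s : sim a b -> is_vw (b r) -> is_vw (b s) -> sim a (swap_labels r s b).
Proof. intros H Hr Hs. apply sim_sym, sim_swap_l; auto. now apply sim_sym. Qed.

(* [l] is the support of a permutation relating [a] and [b]. *)
Lemma sim_pcount_window a b : sim a b -> exists l, forall W, NoDup W -> incl l W ->
  forall P : lab -> Prop, pcount (fun x => P (a x)) W = pcount (fun x => P (b x)) W.
Proof.
  intros [sg [t [Hst [[l Hl] [Hv Hb]]]]]. exists l. intros W ND Hinc P.
  assert (Hperm : Permutation (map sg W) W).
  { apply NoDup_Permutation_bis.
    - apply FinFun.Injective_map_NoDup; auto. intros x y E.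
      rewrite <- (proj2 (Hst x)), <- (proj2 (Hst y)), E; auto.
    - rewrite length_map; lia.
    - intros y Hy. apply in_map_iff in Hy as [x [<- Hx]].
      destruct (Z.eq_dec (sg x) x) as [E|E]; [rewrite E; auto|].
      apply Hinc. destruct (in_dec Z.eq_dec (sg x) l) as [Hi|Hi]; auto.
      exfalso. apply Hl in Hi. apply E.
      assert (E2 := f_equal t Hi). now rewrite !(proj2 (Hst _)) in E2. }
  rewrite <- (pcount_perm _ _ _ Hperm), pcount_map. apply pcount_ext.
  intros x _. rewrite Hb. tauto.
Qed.

(** * Underlines *)

Section Diagrams.
Variable I : Z -> Prop.

Lemma underline_cup m c p : is_underline I m c -> In p (cups c) ->
  m (fst p) = Vee /\ m (snd p) = Wedge.
Proof.
  intros [_ [[_ [Ho _]] Hd]] Hp. unfold degree in Hd.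
  destruct (Ho p Hp) as [H|[H1 _]]; auto. exfalso.
  assert (In p (filter (fun p => is_wedgeb (m (fst p))) (cups c)))
    by (apply filter_In; now rewrite H1).
  destruct filter; [contradiction|discriminate].
Qed.

Lemma oriented_vw_end_or_ray c m x : oriented c m -> is_vw (m x) ->
  (exists q, In q (cups c) /\ (x = fst q \/ x = snd q)) \/ ray c x.
Proof.
  intros [Hf _] Hv. destruct (classic (In x (endpoints c))) as [H|H].
  - left. now apply In_endpoints.
  - destruct (classic (ray c x)) as [H2|H2]; auto.
    destruct (Hf x H H2) as [E|E]; rewrite E in Hv; destruct Hv; discriminate.
Qed.

(* Induction on the width of the cup: a narrower cup sharing an end with it
   would already be a cup of both diagrams, contradicting NoDup. *)
Lemma underline_cups_incl_width m : forall n c c', is_underline I m c -> is_underline I m c' ->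
  forall p, In p (cups c) -> (Z.to_nat (snd p - fst p) <= n)%nat -> In p (cups c').
Proof.
  induction n as [|n IH]; intros c c' U U' [a b] Hp Hn; simpl in Hn.
  { destruct U as [[Hc1 _] _]. destruct (Hc1 _ Hp) as [Hab _]; simpl in Hab. lia. }
  assert (Ucp := U). assert (Ucp' := U').
  destruct U as [[Hc1 [Hnd _]] _]. destruct U' as [[Hc1' [Hnd' [Hx' Hr']]] [Ho' _]].
  destruct (underline_cup _ _ _ Ucp Hp) as [Ha Hb]; simpl in Ha, Hb.
  destruct (Hc1 _ Hp) as [Hab _]; simpl in Hab.
  assert (Narrow : forall q, In q (cups c') -> (Z.to_nat (snd q - fst q) <= n)%nat -> In q (cups c))
    by (intros q Hq Hw; exact (IH c' c Ucp' Ucp q Hq Hw)).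
  assert (Hbc : forall a2, In (a2, b) (cups c') -> a2 <= a).
  { intros a2 Hq2. destruct (Z_le_gt_dec a2 a) as [|G]; [assumption|exfalso].
    assert (In (a2, b) (cups c)) by (apply Narrow; auto; simpl; lia).
    assert (E : (a, b) = (a2, b)) by (apply (cup_eq_of_common_end (cups c)); simpl; auto).
    injection E; lia. }
  destruct (oriented_vw_end_or_ray _ _ _ Ho' (or_introl Ha)) as [[[a' b'] [Hq [Ea|Ea]]]|Ra];
    [simpl in Ea; subst a'| |].
  - destruct (Z.lt_total b' b) as [Lt|[->|Gt]]; [exfalso| auto |exfalso].
    + assert (In (a, b') (cups c)) by (apply Narrow; auto; simpl; lia).
      assert (E : (a, b) = (a, b')) by (apply (cup_eq_of_common_end (cups c)); auto).
      injection E; lia.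
    + destruct (oriented_vw_end_or_ray _ _ _ Ho' (or_intror Hb)) as [[[a2 b2] [Hq2 [Eb|Eb]]]|Rb];
        [| simpl in Eb; subst b2 |].
      * destruct (underline_cup _ _ _ Ucp' Hq2) as [Hv _]; simpl in Eb, Hv. congruence.
      * assert (Le := Hbc a2 Hq2). destruct (Z.lt_total a2 a) as [L2|[->|G2]]; [| |lia].
        -- apply (Hx' _ _ Hq2 Hq); simpl; lia.
        -- assert (E : (a, b') = (a, b)) by (apply (cup_eq_of_common_end (cups c')); auto).
           injection E; lia.
      * destruct (Hr' _ Rb) as [_ [_ Hu]]. apply (Hu _ Hq); simpl; lia.
  - destruct (underline_cup _ _ _ Ucp' Hq) as [_ Hv]; simpl in Ea, Hv. congruence.
  - exfalso. destruct (Hr' _ Ra) as [_ [Hne Hu]].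
    destruct (oriented_vw_end_or_ray _ _ _ Ho' (or_intror Hb)) as [[[a2 b2] [Hq2 [Eb|Eb]]]|Rb];
      [| simpl in Eb; subst b2 |].
    + destruct (underline_cup _ _ _ Ucp' Hq2) as [Hv _]; simpl in Eb, Hv. congruence.
    + assert (Le := Hbc a2 Hq2). destruct (Z.lt_total a2 a) as [L2|[->|G2]]; [| |lia].
      * apply (Hu _ Hq2); simpl; lia.
      * apply Hne, In_endpoints. exists (a, b); simpl; auto.
    + destruct Ho' as [_ [_ [_ Hro]]]. apply (Hro a b); auto.
Qed.

Lemma underline_cups_incl m c c' : is_underline I m c -> is_underline I m c' ->
  incl (cups c) (cups c').
Proof. intros U U' p Hp. exact (underline_cups_incl_width m _ c c' U U' p Hp (le_n _)). Qed.

Lemma underline_NoDup_cups m c : is_underline I m c -> NoDup (cups c).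
Proof. intros [[_ [ND _]] _]. now apply NoDup_of_cup_ends. Qed.

Lemma underline_length m c c' : is_underline I m c -> is_underline I m c' ->
  length (cups c) = length (cups c').
Proof.
  intros U U'. apply Nat.le_antisymm; apply NoDup_incl_length;
    eauto using underline_NoDup_cups, underline_cups_incl.
Qed.

Lemma defect_underline m c : is_underline I m c -> defect I m = length (cups c).
Proof.
  intros U. unfold defect.
  destruct (epsilon_spec (inhabits 0%nat)
    (fun n => exists c, is_underline I m c /\ length (cups c) = n)
    (ex_intro _ _ (ex_intro _ c (conj U eq_refl))))
    as [c' [U' <-]].
  eapply underline_length; eauto.
Qed.

Lemma degree_le_cups c g : (degree c g <= length (cups c))%nat.
Proof. apply filter_length_le. Qed.

Lemma degree_ext c g g' : (forall p, In p (cups c) -> g (fst p) = g' (fst p)) ->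
  degree c g = degree c g'.
Proof.
  intros H. unfold degree. f_equal. apply filter_ext_in. intros p Hp. now rewrite H.
Qed.

Definition add_cup (c : cupdiag) (r s : Z) : cupdiag :=
  CupDiag ((r, s) :: cups c) (fun x => ray c x /\ x <> r /\ x <> s).

Lemma add_cup_cupdiag c r s : is_cupdiag I c -> r < s -> I r -> I s ->
  ~ In r (endpoints c) -> ~ In s (endpoints c) ->
  (forall q, In q (cups c) ->
     ~ (fst q < r < snd q /\ snd q < s) /\ ~ (r < fst q < s /\ s < snd q)) ->
  (forall t, r < t < s -> ~ ray c t) ->
  is_cupdiag I (add_cup c r s).
Proof.
  intros [Hc1 [Hnd [Hx Hr]]] Lrs Ir Is Nr Ns Hcross Hb.
  refine (conj _ (conj _ (conj _ _))); simpl.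
  - intros p [<-|Hp]; simpl; auto.
  - change (NoDup (r :: s :: endpoints c)). constructor; [|constructor]; auto.
    intros [E|E]; [lia|auto].
  - intros p q [<-|Hp] [<-|Hq]; simpl; try lia; [apply Hcross| apply Hcross|apply Hx]; auto.
  - intros k [Rk [Ekr Eks]]. destruct (Hr k Rk) as [Ik [Nk Uk]]. repeat split; auto.
    + change (~ In k (r :: s :: endpoints c)). intros [E|[E|E]]; auto.
    + intros p [<-|Hp]; simpl; auto. intros A. apply (Hb k A Rk).
Qed.

Lemma add_cup_oriented c r s g g' : oriented c g ->
  ~ In r (endpoints c) -> ~ In s (endpoints c) ->
  (forall x, x <> r -> x <> s -> g' x = g x) ->
  (g' r = Vee /\ g' s = Wedge) \/ (g' r = Wedge /\ g' s = Vee) ->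
  oriented (add_cup c r s) g'.
Proof.
  intros [Hfr [Hoc [Hrv Hro]]] Nr Ns Hg Hrs.
  assert (Ne : forall p, In p (cups c) -> fst p <> r /\ fst p <> s /\ snd p <> r /\ snd p <> s).
  { intros p Hp. assert (In (fst p) (endpoints c) /\ In (snd p) (endpoints c)) as [A B]
      by (split; apply In_endpoints; exists p; auto).
    repeat split; intro E; rewrite E in *; auto. }
  refine (conj _ (conj _ (conj _ _))); simpl.
  - intros k Hk Rk. change (~ In k (r :: s :: endpoints c)) in Hk.
    assert (k <> r /\ k <> s /\ ~ In k (endpoints c)) as [A [B C]]
      by (repeat split; intro; apply Hk; simpl; auto).
    rewrite Hg by auto. apply Hfr; auto.
  - intros p [<-|Hp]; simpl; auto. destruct (Ne p Hp) as [A [B [C D]]]. rewrite !Hg by auto. auto.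
  - intros k [Rk [A B]]. rewrite Hg by auto. auto.
  - intros k l Hkl [Rk [A B]] [Rl [C D]]. rewrite !Hg by auto. auto.
Qed.

Lemma add_cup_degree c r s g :
  degree (add_cup c r s) g = ((if is_wedgeb (g r) then 1 else 0) + degree c g)%nat.
Proof. unfold degree; simpl. now destruct (is_wedgeb (g r)). Qed.

End Diagrams.

Lemma exists_adjacent_pair (P Q : Z -> Prop) r s : r < s -> P r -> Q s ->
  exists r' s', r' < s' /\ P r' /\ Q s' /\ forall t, r' < t < s' -> ~ P t /\ ~ Q t.
Proof.
  assert (H : forall n r s, (Z.to_nat (s - r) <= n)%nat -> r < s -> P r -> Q s ->
    exists r' s', r' < s' /\ P r' /\ Q s' /\ forall t, r' < t < s' -> ~ P t /\ ~ Q t).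
  { induction n as [|n IH]; intros r0 s0 Hn Hrs Pr Qs; [lia|].
    destruct (classic (exists t, r0 < t < s0 /\ (P t \/ Q t))) as [[t [Ht [Pt|Qt]]]|N].
    - apply (IH t s0); auto; lia.
    - apply (IH r0 t); auto; lia.
    - exists r0, s0. repeat split; auto; intros Hc; apply N; exists t; tauto. }
  intros; eapply H; eauto.
Qed.

Lemma exists_least_Z (P : Z -> Prop) lb x : P x -> (forall y, P y -> lb <= y) ->
  exists m, P m /\ forall y, P y -> m <= y.
Proof.
  intros Px Hlb.
  assert (H : forall n x, (Z.to_nat (x - lb) <= n)%nat -> P x ->
    exists m, P m /\ forall y, P y -> m <= y).
  { induction n as [|n IH]; intros x0 Hn P0.
    - exists x0. split; auto. intros y Py. specialize (Hlb y Py). lia.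
    - destruct (classic (exists y, P y /\ y < x0)) as [[y [Py Ly]]|N].
      + apply (IH y); auto. specialize (Hlb y Py). lia.
      + exists x0. split; auto. intros y Py. apply Z.nlt_ge. eauto. }
  eapply H; eauto.
Qed.

Section Existence.
Variable I : Z -> Prop.

Lemma vw_in_line la k : (forall i, ~ I i -> la i = Circ) -> is_vw (la k) -> I k.
Proof. intros H V. apply NNPP. intros N. rewrite (H k N) in V. destruct V; discriminate. Qed.

Lemma underline_no_vee_wedge la : (forall i, ~ I i -> la i = Circ) ->
  (forall i j, i < j -> ~ (la i = Vee /\ la j = Wedge)) ->
  is_underline I la (CupDiag [] (fun k => is_vw (la k))).
Proof.
  intros HI N.
  refine (conj (conj _ (conj _ (conj _ _))) (conj (conj _ (conj _ (conj _ _))) _)); simpl.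
  - intros p [].
  - constructor.
  - intros p q [].
  - intros k Hk. repeat split; [eapply vw_in_line; eauto|intros []|intros p []].
  - intros k _ Hk. destruct (la k); auto; exfalso; apply Hk; [left|right]; auto.
  - intros p [].
  - auto.
  - intros k l Hkl _ _. apply N; auto.
  - reflexivity.
Qed.

Lemma underline_add_adjacent_cup la i j c' : i < j -> la i = Vee -> la j = Wedge ->
  I i -> I j -> (forall t, i < t < j -> ~ is_vw (la t)) ->
  is_underline I (update (update la i Circ) j Circ) c' ->
  is_underline I la (add_cup c' i j).
Proof.
  set (la' := update (update la i Circ) j Circ).
  intros Hij Vi Wj Ii Ij Hbtw [Hc' [Ho' Hd']].
  assert (Off : forall k, k <> i -> k <> j -> la k = la' k)
    by (intros k Ki Kj; unfold la', update; repeat destruct Z.eq_dec; congruence).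
  assert (Outside : forall k, is_vw (la' k) -> k <> i /\ k <> j /\ (k < i \/ j < k)).
  { intros k Hk. unfold la', update in *.
    destruct (Z.eq_dec k j); [destruct Hk; discriminate|].
    destruct (Z.eq_dec k i); [destruct Hk; discriminate|].
    repeat split; auto. destruct (Z_lt_le_dec k i); [lia|]. destruct (Z_lt_le_dec j k); [lia|].
    exfalso. apply (Hbtw k); auto. lia. }
  assert (Ends : forall k, In k (endpoints c') -> k <> i /\ k <> j /\ (k < i \/ j < k)).
  { intros k Hk. apply Outside. apply In_endpoints in Hk as [p [Hp [E|E]]]; subst;
    destruct Ho' as [_ [Hoc _]]; destruct (Hoc p Hp) as [[A B]|[A B]]; red; rewrite ?A, ?B; auto. }
  assert (EndsC : forall q, In q (cups c') ->
    (fst q < i \/ j < fst q) /\ (snd q < i \/ j < snd q)).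
  { intros q Hq. split; apply Ends, In_endpoints; exists q; auto. }
  split; [|split].
  - apply add_cup_cupdiag; auto.
    + intros Hi. apply Ends in Hi. tauto.
    + intros Hj. apply Ends in Hj. tauto.
    + intros q Hq. destruct (EndsC q Hq). lia.
    + intros t Ht Rt. destruct Ho' as [_ [_ [Hrv _]]]. destruct (Outside t (Hrv t Rt)). lia.
  - apply (add_cup_oriented _ _ _ la'); auto.
    + intros Hi. apply Ends in Hi. tauto.
    + intros Hj. apply Ends in Hj. tauto.
  - rewrite add_cup_degree, Vi. simpl. rewrite <- Hd'. apply degree_ext.
    intros p Hp. apply Off; apply Ends, In_endpoints; exists p; auto.
Qed.

Lemma pcount_vw_clear_pair la F i j : In i F \/ In j F -> is_vw (la i) -> is_vw (la j) ->
  (pcount (fun x => is_vw (update (update la i Circ) j Circ x)) F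
   < pcount (fun x => is_vw (la x)) F)%nat.
Proof.
  intros Hij Vi Vj. apply pcount_lt.
  - intros x _. unfold update. repeat destruct Z.eq_dec; auto; intros [H|H]; discriminate.
  - destruct Hij as [Fk|Fk]; [exists i|exists j]; unfold update;
      repeat destruct Z.eq_dec; subst; repeat split; auto; intros [H|H]; discriminate.
Qed.

(* Induction on the number of labelled vertices in the exceptional set [F]:
   an adjacent pair [∨ ∧] must meet [F]. *)
Lemma exists_underline_bounded n : forall la F, (forall i, ~ I i -> la i = Circ) ->
  (forall i j, i < j -> ~ In i F -> ~ In j F -> ~ (la i = Vee /\ la j = Wedge)) ->
  (pcount (fun x => is_vw (la x)) F <= n)%nat -> exists c, is_underline I la c.
Proof.
  induction n as [|n IH]; intros la F HI HF Hn.
  all: destruct (classic (exists i j, i < j /\ la i = Vee /\ la j = Wedge))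
         as [[i0 [j0 [Hij0 [Vi0 Wj0]]]]|N];
       [|exists (CupDiag [] (fun k => is_vw (la k)));
         apply underline_no_vee_wedge; [exact HI|intros i j Hij H; apply N; eauto]].
  all: destruct (exists_adjacent_pair (fun x => la x = Vee) (fun x => la x = Wedge)
                   i0 j0 Hij0 Vi0 Wj0) as [i [j [Hij [Vi [Wj Hbtw]]]]].
  all: assert (Fij : In i F \/ In j F)
         by (apply NNPP; intros N'; apply (HF i j Hij); tauto).
  all: assert (Lt := pcount_vw_clear_pair la F i j Fij (or_introl Vi) (or_intror Wj)).
  - lia.
  - set (la' := update (update la i Circ) j Circ) in Lt.
    destruct (IH la' F) as [c' Uc'].
    + intros k Hk. unfold la', update. repeat destruct Z.eq_dec; auto.
    + intros a b Hab Ha Hb. unfold la', update.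
      repeat destruct Z.eq_dec; try (intros [X Y]; discriminate). apply HF; auto.
    + lia.
    + exists (add_cup c' i j). apply underline_add_adjacent_cup; auto.
      * apply (vw_in_line la); auto; red; auto.
      * apply (vw_in_line la); auto; red; auto.
      * intros t Ht [V|V]; destruct (Hbtw t Ht); auto.
Qed.

Lemma exists_underline la : is_weight I la -> exists c, is_underline I la c.
Proof. intros [HI [F HF]]. exact (exists_underline_bounded _ la F HI HF (le_n _)). Qed.

End Existence.

Section Rays.
Variable I : Z -> Prop.

Lemma pcount_vee_cup_ends m cs :
  (forall p, In p cs ->
     (m (fst p) = Vee /\ m (snd p) = Wedge) \/ (m (fst p) = Wedge /\ m (snd p) = Vee)) ->
  pcount (fun x => m x = Vee) (cup_ends cs) = length cs.
Proof.
  induction cs as [|p cs IH]; intros H; [reflexivity|]. simpl.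
  rewrite !pcount_cons, IH by auto using in_cons.
  destruct (H p (in_eq _ _)) as [[-> ->]|[-> ->]];
    destruct (decideP (Vee = Vee)), (decideP (Wedge = Vee)); congruence || lia.
Qed.

Lemma pcount_vee_endpoints c m W : is_cupdiag I c -> oriented c m -> NoDup W ->
  incl (endpoints c) W ->
  pcount (fun x => m x = Vee /\ In x (endpoints c)) W = length (cups c).
Proof.
  intros Hc Ho ND Hinc. rewrite pcount_filter.
  rewrite (pcount_perm _ _ (endpoints c)); [apply pcount_vee_cup_ends, Ho|].
  apply NoDup_Permutation; [now apply NoDup_filter|apply Hc|].
  intros x; rewrite filter_In. destruct (decideP (In x (endpoints c))); intuition; discriminate.
Qed.

(* The rays of an oriented diagram read ∧…∧∨…∨, so turning the ray [k]
   from ∧ into ∨ strictly enlarges the set of ∨-rays. *)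
Lemma pcount_vee_lt_of_ray c m1 m2 k W : is_cupdiag I c -> oriented c m1 -> oriented c m2 ->
  ray c k -> m1 k = Wedge -> m2 k = Vee -> NoDup W -> incl (endpoints c) W -> In k W ->
  (pcount (fun x => m1 x = Vee) W < pcount (fun x => m2 x = Vee) W)%nat.
Proof.
  intros Hc Ho1 Ho2 Rk E1 E2 ND Hinc Hk.
  rewrite (pcount_split _ (fun x => In x (endpoints c))).
  rewrite (pcount_split (fun x => m2 x = Vee) (fun x => In x (endpoints c))).
  rewrite !pcount_vee_endpoints by auto.
  apply Nat.add_lt_mono_l, pcount_lt.
  - intros x Hx [Vx Ex]. split; auto.
    assert (Rx : ray c x).
    { destruct (oriented_vw_end_or_ray _ _ _ Ho1 (or_introl Vx)) as [[q [Hq Eq]]|R]; auto.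
      exfalso; apply Ex, In_endpoints; eauto. }
    destruct (Z.lt_total x k) as [L|[->|G]]; [exfalso| congruence |].
    + destruct Ho1 as [_ [_ [_ Hro]]]. apply (Hro x k); auto.
    + destruct Ho2 as [_ [_ [Hrv Hro]]]. destruct (Hrv x Rx) as [H|H]; auto.
      exfalso. apply (Hro k x); auto.
  - exists k. split; auto. split; [split; auto; apply Hc; auto|]. intros [H _]; congruence.
Qed.

Lemma oriented_sim_ray_eq c m1 m2 : is_cupdiag I c -> oriented c m1 -> oriented c m2 ->
  sim m1 m2 -> forall k, ray c k -> m1 k = m2 k.
Proof.
  intros Hc Ho1 Ho2 S k Rk. destruct (sim_pcount_window _ _ S) as [l Hl].
  set (W := nodup Z.eq_dec (l ++ endpoints c ++ [k])).
  assert (Hin : forall x, In x (l ++ endpoints c ++ [k]) -> In x W) by (intros; now apply nodup_In).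
  assert (Heq := Hl W (NoDup_nodup _ _) (fun x Hx => Hin x (in_or_app _ _ _ (or_introl Hx)))
                  (fun v => v = Vee)).
  assert (Hinc : incl (endpoints c) W)
    by (intros x Hx; apply Hin; apply in_or_app; right; apply in_or_app; auto).
  assert (Hk : In k W) by (apply Hin; apply in_or_app; right; apply in_or_app; right; simpl; auto).
  destruct (proj1 (proj2 (proj2 Ho1)) k Rk) as [V1|W1];
    destruct (proj1 (proj2 (proj2 Ho2)) k Rk) as [V2|W2]; try congruence; exfalso.
  - assert (H := pcount_vee_lt_of_ray c m2 m1 k W Hc Ho2 Ho1 Rk W2 V1 (NoDup_nodup _ _) Hinc Hk).
    lia.
  - assert (H := pcount_vee_lt_of_ray c m1 m2 k W Hc Ho1 Ho2 Rk W1 V2 (NoDup_nodup _ _) Hinc Hk).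
    lia.
Qed.

End Rays.

(** * Weights above a weight *)

Fixpoint orientations (la : Z -> lab) (cs : list (Z * Z)) : list (Z -> lab) :=
  match cs with
  | [] => [la]
  | p :: cs => orientations la cs ++ map (swap_labels (fst p) (snd p)) (orientations la cs)
  end.

Definition reorients (la m : Z -> lab) (cs : list (Z * Z)) : Prop :=
  (forall k, ~ In k (cup_ends cs) -> m k = la k) /\
  (forall p, In p cs ->
     (m (fst p) = Vee /\ m (snd p) = Wedge) \/ (m (fst p) = Wedge /\ m (snd p) = Vee)).

Lemma orientations_length la cs : length (orientations la cs) = (2 ^ length cs)%nat.
Proof. induction cs; simpl; auto. rewrite length_app, length_map, IHcs. lia. Qed.

Section Orientations.
Variable la : Z -> lab.

Lemma In_orientations cs : NoDup (cup_ends cs) ->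
  (forall p, In p cs -> la (fst p) = Vee /\ la (snd p) = Wedge) ->
  forall m, In m (orientations la cs) <-> reorients la m cs.
Proof.
  induction cs as [|p cs IH]; intros ND Hl m.
  - simpl. split.
    + intros [<-|[]]. split; auto.
    + intros [H _]. left. apply functional_extensionality; intro k; symmetry; apply H; simpl; auto.
  - simpl in ND. inversion ND as [|? ? N1 ND1]; subst. inversion ND1 as [|? ? N2 ND2]; subst.
    specialize (IH ND2 (fun q Hq => Hl q (in_cons _ _ _ Hq))).
    destruct (Hl p (in_eq _ _)) as [Va Wb].
    assert (NA : ~ In (fst p) (cup_ends cs)) by (intro; apply N1; right; auto).
    assert (Hne : forall q, In q cs ->
      fst q <> fst p /\ fst q <> snd p /\ snd q <> fst p /\ snd q <> snd p).
    { intros q Hq. assert (In (fst q) (cup_ends cs) /\ In (snd q) (cup_ends cs)) as [A B]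
        by (split; apply In_cup_ends; exists q; auto).
      repeat split; intro E; rewrite E in *; simpl in N1; tauto. }
    simpl. rewrite in_app_iff, in_map_iff. split.
    + intros [Hm|[m0 [<- Hm0]]].
      * apply IH in Hm as [G1 G2]. split.
        -- intros k Hk. apply G1. intro; apply Hk; simpl; auto.
        -- intros q [<-|Hq]; auto. left. rewrite !G1; auto.
      * apply IH in Hm0 as [G1 G2]. split.
        -- intros k Hk. simpl in Hk. rewrite swap_labels_other by (intro; apply Hk; auto).
           apply G1. intro; apply Hk; auto.
        -- intros q [<-|Hq].
           ++ right. rewrite swap_labels_l, swap_labels_r, !G1; auto.
           ++ destruct (Hne q Hq) as [A [B [C D]]]. rewrite !swap_labels_other; auto.
    + intros [G1 G2]. destruct (G2 p (in_eq _ _)) as [[A B]|[A B]].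
      * left. apply IH. split; [|intros q Hq; apply G2; right; auto].
        intros k Hk. destruct (Z.eq_dec k (fst p)) as [->|E1]; [congruence|].
        destruct (Z.eq_dec k (snd p)) as [->|E2]; [congruence|]. apply G1. simpl. intuition.
      * right. exists (swap_labels (fst p) (snd p) m). split; [apply swap_labels_involutive|].
        apply IH. split.
        -- intros k Hk.
           destruct (Z.eq_dec k (fst p)) as [->|E1]; [rewrite swap_labels_l; congruence|].
           destruct (Z.eq_dec k (snd p)) as [->|E2]; [rewrite swap_labels_r; congruence|].
           rewrite swap_labels_other by auto. apply G1. simpl. intuition.
        -- intros q Hq. destruct (Hne q Hq) as [A1 [B1 [C1 D1]]].
           rewrite !swap_labels_other; auto. apply G2; right; auto.
Qed.

Lemma NoDup_orientations cs : NoDup (cup_ends cs) ->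
  (forall p, In p cs -> la (fst p) = Vee /\ la (snd p) = Wedge) ->
  NoDup (orientations la cs).
Proof.
  induction cs as [|p cs IH]; intros ND Hl; simpl; [repeat constructor; auto|].
  simpl in ND. inversion ND as [|? ? N1 ND1]; subst. inversion ND1 as [|? ? N2 ND2]; subst.
  specialize (IH ND2 (fun q Hq => Hl q (in_cons _ _ _ Hq))).
  assert (Ch := In_orientations cs ND2 (fun q Hq => Hl q (in_cons _ _ _ Hq))).
  destruct (Hl p (in_eq _ _)) as [Va Wb].
  apply NoDup_app; auto.
  - apply FinFun.Injective_map_NoDup; auto. intros x y E.
    rewrite <- (swap_labels_involutive (fst p) (snd p) x),
      <- (swap_labels_involutive (fst p) (snd p) y), E.
    reflexivity.
  - intros m Hm Hm2. apply in_map_iff in Hm2 as [m0 [<- Hm0]].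
    apply Ch in Hm as [G1 _]. apply Ch in Hm0 as [G1' _].
    assert (A := G1 (fst p) (fun H => N1 (or_intror H))).
    rewrite swap_labels_l, G1' in A by auto. congruence.
Qed.

Lemma orientations_sim cs : NoDup (cup_ends cs) ->
  (forall p, In p cs -> la (fst p) = Vee /\ la (snd p) = Wedge) ->
  forall m, In m (orientations la cs) -> sim la m.
Proof.
  induction cs as [|p cs IH]; intros ND Hl m Hm; simpl in Hm.
  - destruct Hm as [<-|[]]. apply sim_refl.
  - simpl in ND. inversion ND as [|? ? N1 ND1]; subst. inversion ND1 as [|? ? N2 ND2]; subst.
    specialize (IH ND2 (fun q Hq => Hl q (in_cons _ _ _ Hq))).
    assert (Ch := In_orientations cs ND2 (fun q Hq => Hl q (in_cons _ _ _ Hq))).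
    destruct (Hl p (in_eq _ _)) as [Va Wb].
    apply in_app_iff in Hm as [Hm|Hm]; auto. apply in_map_iff in Hm as [m0 [<- Hm0]].
    apply sim_swap_r; [now apply IH| |]; apply Ch in Hm0 as [G1 _].
    + rewrite G1; [left; auto|]. intro; apply N1; right; auto.
    + rewrite G1; [right; auto|]. auto.
Qed.

End Orientations.

Lemma is_weight_of_agree I la m X : is_weight I la -> (forall k, ~ In k X -> m k = la k) ->
  (forall k, ~ I k -> m k = Circ) -> is_weight I m.
Proof.
  intros [HI [F HF]] Hx Hm. split; auto. exists (F ++ X). intros i j Hij Hi Hj.
  rewrite in_app_iff in Hi, Hj. rewrite !Hx by tauto. apply HF; tauto.
Qed.

Lemma card_weights_above I la : is_weight I la ->
  has_card (fun mu => is_weight I mu /\ subw I la mu) (2 ^ defect I la)%nat.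
Proof.
  intros Hw. destruct (exists_underline I la Hw) as [c0 U0].
  rewrite (defect_underline I la c0 U0).
  assert (ND : NoDup (cup_ends (cups c0))) by apply U0.
  assert (Hl : forall p, In p (cups c0) -> la (fst p) = Vee /\ la (snd p) = Wedge)
    by (intros; eapply underline_cup; eauto).
  exists (orientations la (cups c0)). split; [now apply NoDup_orientations|].
  split; [|apply orientations_length].
  intros mu. rewrite (In_orientations la _ ND Hl). split.
  - intros [Wm [S [c [U Ho]]]]. split.
    + intros k Hk. assert (Nk : ~ In k (endpoints c)).
      { intros H. apply Hk, In_cup_ends. apply In_endpoints in H as [p [Hp E]].
        exists p. split; auto. exact (underline_cups_incl I la c c0 U U0 p Hp). }
      destruct (classic (ray c k)) as [R|R].
      * symmetry. apply (oriented_sim_ray_eq I c la mu); auto; apply U.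
      * destruct U as [_ [[Hfr _] _]]. apply (sim_not_vw la mu k S).
        destruct (Hfr k Nk R) as [E|E]; rewrite E; intros [X|X]; discriminate.
    + intros p Hp. apply Ho. exact (underline_cups_incl I la c0 c U0 U p Hp).
  - intros [G1 G2]. split.
    + apply (is_weight_of_agree I la mu (cup_ends (cups c0)) Hw G1). intros k Hk.
      rewrite G1; [apply Hw; auto|]. intro H. apply In_cup_ends in H as [p [Hp [E|E]]]; subst;
      destruct U0 as [[Hc1 _] _]; destruct (Hc1 p Hp) as [_ [A B]]; auto.
    + split.
      { apply (orientations_sim la (cups c0) ND Hl). apply In_orientations; auto. split; auto. }
      exists c0. split; auto. destruct U0 as [[_ [_ [_ Hr]]] [[Hfr [Hoc [Hrv Hro]]] _]].
      refine (conj _ (conj _ (conj _ _))).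
      * intros k Hk R. rewrite G1; auto.
      * auto.
      * intros k R. rewrite G1; [auto|apply Hr; auto].
      * intros k l Hkl Rk Rl. rewrite !G1 by (apply Hr; auto). auto.
Qed.

(** * Weights below a weight *)

Definition few_between (V : Z -> Prop) (a b : Z) (K : nat) : Prop :=
  forall L, NoDup L -> (forall z, In z L -> a < z < b /\ V z) -> (length L <= K)%nat.

Lemma few_between_mono V a b a' b' K K' : a <= a' -> b' <= b -> (K <= K')%nat ->
  few_between V a b K -> few_between V a' b' K'.
Proof.
  intros Ha Hb HK H L ND HL. apply (Nat.le_trans _ K); auto. apply H; auto.
  intros z Hz. destruct (HL z Hz). split; [lia|auto].
Qed.

(* Induction on [K], moving [y] to the first [V]-vertex on its right. *)
Lemma few_between_right_finite V K y :
  exists L, forall x, V x -> y < x -> few_between V y x K -> In x L.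
Proof.
  revert y. induction K as [|K IH]; intros y;
  (destruct (classic (exists x, V x /\ y < x)) as [[x0 [V0 L0]]|N];
   [|exists []; intros x Vx Lx; exfalso; eauto]);
  destruct (exists_least_Z (fun x => V x /\ y < x) y x0 (conj V0 L0)) as [z [[Vz Lz] Mz]];
    try (intros ? [_ ?]; lia).
  - exists [z]. intros x Vx Lx B. destruct (Z.eq_dec x z) as [->|E]; [left; auto|exfalso].
    assert (z < x) by (specialize (Mz x (conj Vx Lx)); lia).
    assert (NDz : NoDup [z]) by (repeat constructor; intros []).
    specialize (B [z] NDz). simpl in B.
    assert (1 <= 0)%nat; [|lia]. apply B. intros w [<-|[]]; auto.
  - destruct (IH z) as [L HL]. exists (z :: L). intros x Vx Lx B.
    destruct (Z.eq_dec x z) as [->|E]; [left; auto|right].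
    assert (z < x) by (specialize (Mz x (conj Vx Lx)); lia).
    apply HL; auto. intros L' ND HL'. specialize (B (z :: L')). simpl in B.
    assert (S (length L') <= S K)%nat; [|lia]. apply B.
    + constructor; auto. intro H'. apply HL' in H'. lia.
    + intros w [<-|Hw]; [split; auto; lia|]. apply HL' in Hw. split; [lia|tauto].
Qed.

Lemma few_between_left_finite V K y :
  exists L, forall x, V x -> x < y -> few_between V x y K -> In x L.
Proof.
  destruct (few_between_right_finite (fun z => V (- z)) K (- y)) as [L HL].
  exists (map Z.opp L). intros x Vx Lx B. apply in_map_iff. exists (- x). split; [lia|].
  apply HL; [rewrite Z.opp_involutive; auto|lia|].
  intros L' ND HL'. rewrite <- (length_map Z.opp). apply B.
  - apply FinFun.Injective_map_NoDup; auto. intros a b E; lia.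
  - intros w Hw. apply in_map_iff in Hw as [w' [<- Hw']]. apply HL' in Hw'. split; [lia|tauto].
Qed.

Lemma few_between_near_finite V K (A : list Z) : exists L, forall y x, In y A -> V x ->
  (y < x /\ few_between V y x K) \/ (x < y /\ few_between V x y K) -> In x L.
Proof.
  induction A as [|y A [L HL]]; [exists []; intros y x []|].
  destruct (few_between_right_finite V K y) as [LR HR].
  destruct (few_between_left_finite V K y) as [LL HLL].
  exists (LR ++ LL ++ L). intros y' x [<-|Hy] Vx Hx; rewrite !in_app_iff; [|eauto].
  destruct Hx as [[]|[]]; auto.
Qed.

(* Outside [F] the weight reads ∧…∧∨…∨, so an ∧ left of a ∨ has a vertex of
   [F] or the leftmost ∨ outside [F] between them. *)
Lemma wedge_vee_anchor I la : is_weight I la -> exists A : list Z,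
  forall a b, a < b -> la a = Wedge -> la b = Vee -> exists y, In y A /\ a <= y <= b.
Proof.
  intros [_ [F HF]].
  assert (Hout : exists A, forall a b, a < b -> la a = Wedge -> la b = Vee ->
    ~ In a F -> ~ In b F -> exists y, In y A /\ a <= y <= b).
  { destruct (classic (exists a0 b0, ~ In a0 F /\ ~ In b0 F /\ la a0 = Wedge /\ la b0 = Vee))
      as [[a0 [b0 [Fa0 [Fb0 [Wa0 Vb0]]]]]|N];
      [|exists []; intros a b _ Wa Vb Fa Fb; exfalso; apply N; exists a, b; auto].
    assert (Hgt : forall x, ~ In x F -> la x = Vee -> a0 < x).
    { intros x Fx Vx. destruct (Z.lt_total x a0) as [L|[E|G]]; auto.
      - exfalso. apply (HF x a0); auto.
      - subst; congruence. }
    destruct (exists_least_Z (fun x => ~ In x F /\ la x = Vee) a0 b0 (conj Fb0 Vb0))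
      as [m [[Fm Vm] Mm]]; [intros y [A B]; specialize (Hgt y A B); lia|].
    exists [m]. intros a b Lab Wa Vb Fa Fb. exists m. split; [left; auto|].
    split; [|apply Mm; auto].
    destruct (Z.lt_total a m) as [L|[E|G]]; [lia|subst; congruence|].
    exfalso; apply (HF m a); auto. }
  destruct Hout as [A HA]. exists (F ++ A). intros a b Lab Wa Vb.
  destruct (classic (In a F)) as [Fa|Fa]; [exists a; rewrite in_app_iff; split; [auto|lia]|].
  destruct (classic (In b F)) as [Fb|Fb]; [exists b; rewrite in_app_iff; split; [auto|lia]|].
  destruct (HA a b Lab Wa Vb Fa Fb) as [y [Hy Ly]]. exists y. rewrite in_app_iff. auto.
Qed.

Lemma cup_few_between I c la a b : is_cupdiag I c -> oriented c la -> In (a, b) (cups c) ->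
  few_between (fun z => is_vw (la z)) a b (2 * length (cups c)).
Proof.
  intros Hc Ho Hp L ND HL. rewrite <- cup_ends_length. apply NoDup_incl_length; auto.
  intros z Hz. apply HL in Hz as [Bz Vz].
  destruct (oriented_vw_end_or_ray _ _ _ Ho Vz) as [[q [Hq Eq]]|Rz]; [apply In_cup_ends; eauto|].
  exfalso. destruct Hc as [_ [_ [_ Hr]]]. destruct (Hr z Rz) as [_ [_ Hu]].
  apply (Hu _ Hp); simpl; lia.
Qed.

Fixpoint variants (la : Z -> lab) (X : list Z) : list (Z -> lab) :=
  match X with
  | [] => [la]
  | x :: X => flat_map (fun g => map (update g x) [Circ; Cross; Vee; Wedge]) (variants la X)
  end.

Lemma In_variants la X m : (forall k, ~ In k X -> m k = la k) -> In m (variants la X).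
Proof.
  revert m. induction X as [|x X IH]; intros m H; cbn [variants].
  - left. apply functional_extensionality; intro k; symmetry; apply H; auto.
  - apply in_flat_map. exists (update m x (la x)). split.
    + apply IH. intros k Hk. unfold update. destruct Z.eq_dec; subst; auto.
      apply H. simpl; intros [E|E]; [congruence|tauto].
    + apply in_map_iff. exists (m x). split.
      * apply functional_extensionality; intro k; unfold update. destruct Z.eq_dec; subst; auto.
      * destruct (m x); simpl; tauto.
Qed.

(* Each cup on which [mu] and [la] disagree encloses at most [2 n] labelled
   vertices and spans an anchor from [wedge_vee_anchor]. *)
Lemma below_support_finite I la n : is_weight I la -> exists X, forall mu c,
  sim mu la -> is_underline I mu c -> oriented c la -> (length (cups c) <= n)%nat ->
  forall x, ~ In x X -> mu x = la x.
Proof.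
  intros Hw. destruct (wedge_vee_anchor I la Hw) as [A HA].
  destruct (few_between_near_finite (fun z => is_vw (la z)) (2 * n) A) as [L HL].
  exists (A ++ L). intros mu c S U Ho Hn x Hx. rewrite in_app_iff in Hx.
  destruct (classic (In x (endpoints c))) as [E|E].
  - apply In_endpoints in E as [[a b] [Hp Ex]]. simpl in Ex.
    destruct (underline_cup _ _ _ _ U Hp) as [Va Wb]; simpl in Va, Wb.
    destruct (proj1 (proj2 Ho) _ Hp) as [[A1 B1]|[A1 B1]]; simpl in A1, B1;
      [destruct Ex; subst; congruence|exfalso].
    assert (Lab : a < b) by apply (proj1 (proj1 U) _ Hp).
    assert (Few := cup_few_between I c la a b (proj1 U) Ho Hp).
    destruct (HA a b Lab A1 B1) as [y [Hy Ly]].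
    apply Hx. destruct (Z.eq_dec x y) as [->|Ne]; [auto|right].
    apply (HL y x Hy).
    + destruct Ex; subst; red; rewrite ?A1, ?B1; auto.
    + destruct Ex; subst; [right|left]; (split; [lia|]);
        (eapply few_between_mono; [| | |exact Few]; lia).
  - destruct (classic (ray c x)) as [R|R].
    + apply (oriented_sim_ray_eq I c mu la); auto; apply U.
    + destruct U as [_ [[Hfr _] _]]. symmetry. apply (sim_not_vw mu la x S).
      destruct (Hfr x E R) as [V|V]; rewrite V; intros [B|B]; discriminate.
Qed.

(* A cup of [c] that [la] orients anticlockwise is an ∨ left of an ∧ in [la],
   so it has an end in [F]. *)
Lemma cups_le_exceptional_degree I la F mu c :
  (forall i j, i < j -> ~ In i F -> ~ In j F -> ~ (la i = Vee /\ la j = Wedge)) ->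
  is_underline I mu c -> oriented c la -> (length (cups c) <= length F + degree c la)%nat.
Proof.
  intros HF [[Hc1 [Hnd _]] _] Ho.
  set (cw := fun p : Z * Z => is_wedgeb (la (fst p))).
  rewrite <- (filter_length cw (cups c)). unfold degree. fold cw.
  enough (length (filter (fun x => negb (cw x)) (cups c)) <= length F)%nat by lia.
  set (g := fun p : Z * Z => if in_dec Z.eq_dec (fst p) F then fst p else snd p).
  rewrite <- (length_map g). apply NoDup_incl_length.
  - apply NoDup_map_cup_end; [now apply NoDup_cup_ends_filter|].
    intros p _. unfold g; destruct in_dec; auto.
  - intros y Hy. apply in_map_iff in Hy as [p [<- Hp]]. apply filter_In in Hp as [Hp Hn].
    unfold cw in Hn. destruct Ho as [_ [Hoc _]].
    destruct (Hoc p Hp) as [[A B]|[A B]]; [|rewrite A in Hn; discriminate].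
    destruct (Hc1 p Hp) as [Lt _]. unfold g. destruct in_dec; auto.
    destruct (classic (In (snd p) F)); auto. exfalso. apply (HF (fst p) (snd p)); auto.
Qed.

Lemma finite_weights_below_of_degree I la j : is_weight I la ->
  finite_set (fun mu => is_weight I mu /\ sim mu la /\
    exists c, is_underline I mu c /\ oriented c la /\ Z.of_nat (degree c la) = j).
Proof.
  intros Hw. assert (Hw' := Hw). destruct Hw' as [_ [F HF]].
  destruct (below_support_finite I la (length F + Z.to_nat j) Hw) as [X HX].
  exists (variants la X). intros mu [_ [S [c [U [Ho Hd]]]]]. apply In_variants.
  apply (HX mu c S U Ho). assert (B := cups_le_exceptional_degree I la F mu c HF U Ho). lia.
Qed.

Lemma finite_weights_below I la : is_weight I la -> block_defect_finite I la ->
  finite_set (fun mu => is_weight I mu /\ subw I mu la).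
Proof.
  intros Hw [N HN]. destruct (below_support_finite I la N Hw) as [X HX].
  exists (variants la X). intros mu [Wm [S [c [U Ho]]]]. apply In_variants.
  apply (HX mu c S U Ho). rewrite <- (defect_underline I mu c U). apply HN; auto.
  now apply sim_sym.
Qed.

Definition cup_end (v : lab) (p : Z * Z) : Z := if is_wedgeb v then snd p else fst p.

Lemma underline_cup_end I m c p v : is_underline I m c -> In p (cups c) -> is_vw v ->
  m (cup_end v p) = v /\ forall x, (x = fst p \/ x = snd p) -> m x = v -> x = cup_end v p.
Proof.
  intros U Hp [ -> | -> ]; destruct (underline_cup I m c p U Hp) as [A B]; unfold cup_end; simpl;
    (split; [auto|intros x [E|E] Hx; subst x; congruence]).
Qed.

(* Count the [v]'s in a window: each cup of an underline carries exactly one,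
   and the remaining [v]'s of [la] sit on rays of [c0]. *)
Lemma block_defect_finite_of_few_rays I la c0 v k : is_underline I la c0 -> is_vw v ->
  (forall L, NoDup L -> (forall x, In x L -> ray c0 x /\ la x = v) -> (length L < k)%nat) ->
  block_defect_finite I la.
Proof.
  intros U0 Hv Hk. exists (length (cups c0) + k)%nat. intros mu Wm S.
  destruct (exists_underline I mu Wm) as [c U]. rewrite (defect_underline I mu c U).
  destruct (sim_pcount_window _ _ S) as [l Hl].
  set (W := nodup Z.eq_dec (l ++ endpoints c ++ endpoints c0)).
  assert (ND : NoDup W) by apply NoDup_nodup.
  assert (Hin : forall x, In x (l ++ endpoints c ++ endpoints c0) -> In x W)
    by (intros; now apply nodup_In).
  assert (Heq := Hl W ND (fun x Hx => Hin x (in_or_app _ _ _ (or_introl Hx))) (fun w => w = v)).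
  simpl in Heq.
  assert (Hmu : (length (cups c) <= pcount (fun x => mu x = v) W)%nat).
  { rewrite <- (length_map (cup_end v)). apply NoDup_length_le_pcount.
    - apply NoDup_map_cup_end; [apply U|]. intros p _. unfold cup_end. destruct is_wedgeb; auto.
    - intros x Hx. apply in_map_iff in Hx as [p [<- Hp]].
      split; [|apply (underline_cup_end I mu c p v U Hp Hv)].
      apply Hin, in_or_app; right; apply in_or_app; left.
      apply In_endpoints. exists p. unfold cup_end. destruct is_wedgeb; auto. }
  rewrite (pcount_split _ (fun x => In x (endpoints c0))) in Heq.
  assert (Hcups : (pcount (fun x => la x = v /\ In x (endpoints c0)) W <= length (cups c0))%nat).
  { rewrite <- (length_map (cup_end v)). apply pcount_le_length; auto. intros x _ [Vx Ex].
    apply In_endpoints in Ex as [p [Hp Ep]]. apply in_map_iff. exists p. split; auto.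
    symmetry. apply (proj2 (underline_cup_end I la c0 p v U0 Hp Hv)); auto. }
  assert (Hrays : (pcount (fun x => la x = v /\ ~ In x (endpoints c0)) W < k)%nat).
  { apply Hk; [now apply NoDup_filter|]. intros x Hx.
    apply filter_In in Hx as [_ Hx]. destruct (decideP (la x = v /\ ~ In x (endpoints c0)))
      as [[Vx Ex]|]; [|discriminate].
    split; auto. assert (Vw : is_vw (la x)) by now rewrite Vx.
    destruct (oriented_vw_end_or_ray c0 la x (proj1 (proj2 U0)) Vw) as [[q [Hq Eq]]|R]; auto.
    exfalso; apply Ex, In_endpoints; eauto. }
  lia.
Qed.

Lemma underline_close_ray_pair I la mu c r s : is_weight I mu -> sim mu la ->
  is_underline I mu c -> oriented c la -> ray c r -> ray c s -> r < s ->
  mu r = Wedge -> mu s = Vee -> (forall t, r < t < s -> ~ ray c t) ->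
  is_weight I (swap_labels r s mu) /\ sim (swap_labels r s mu) la /\
  is_underline I (swap_labels r s mu) (add_cup c r s) /\
  oriented (add_cup c r s) la /\ degree (add_cup c r s) la = S (degree c la).
Proof.
  intros Wmu Smu [Hcd [Hom Hdm]] Ho Rr Rs Lrs Mr Ms Nbt.
  assert (RayEq : forall x, ray c x -> mu x = la x)
    by (intros; apply (oriented_sim_ray_eq I c mu la); auto).
  destruct (proj2 (proj2 (proj2 Hcd)) r Rr) as [Ir [Nr Ur]].
  destruct (proj2 (proj2 (proj2 Hcd)) s Rs) as [Is [Ns Us]].
  set (mu' := swap_labels r s mu).
  assert (Off : forall x, x <> r -> x <> s -> mu' x = mu x)
    by (intros; now apply swap_labels_other).
  assert (Left : forall p, In p (cups c) -> fst p <> r /\ fst p <> s).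
  { intros p Hp. assert (In (fst p) (endpoints c)) by (apply In_endpoints; eauto).
    split; intros E; rewrite E in *; auto. }
  refine (conj _ (conj _ (conj (conj _ (conj _ _)) (conj _ _)))).
  - apply (is_weight_of_agree I mu mu' [r; s] Wmu).
    + intros x Hx. apply Off; intros ->; apply Hx; simpl; auto.
    + intros x Hx. rewrite Off by (intros ->; tauto). now apply Wmu.
  - apply sim_swap_l; auto; red; auto.
  - apply add_cup_cupdiag; auto. intros q Hq. split; intros Hc.
    + apply (Ur q Hq); lia.
    + apply (Us q Hq); lia.
  - apply (add_cup_oriented _ _ _ mu); auto. left. unfold mu'.
    rewrite swap_labels_l, swap_labels_r; auto.
  - rewrite add_cup_degree. unfold mu' at 1. rewrite swap_labels_l, Ms. simpl.
    rewrite <- Hdm. apply degree_ext. intros p Hp. destruct (Left p Hp). now apply Off.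
  - apply (add_cup_oriented _ _ _ la); auto. right. rewrite <- (RayEq r), <- (RayEq s); auto.
  - rewrite add_cup_degree, <- (RayEq r Rr), Mr. reflexivity.
Qed.

Section Ladder.
Variables (I : Z -> Prop) (la : Z -> lab) (c0 : cupdiag).

(* Stage [k]: a weight below [la] of degree [k], obtained by closing [k] pairs
   of rays of [c0] into cups; [L] lists the [2 k] rays used up. *)
Definition ladder (k : nat) : Prop :=
  exists mu c L, is_weight I mu /\ sim mu la /\ is_underline I mu c /\ oriented c la /\
    degree c la = k /\ length L = (2 * k)%nat /\ forall x, ray c x <-> ray c0 x /\ ~ In x L.

Lemma ladder_0 : is_weight I la -> is_underline I la c0 -> ladder 0.
Proof.
  intros Hw U0. exists la, c0, [].
  refine (conj Hw (conj (sim_refl la) (conj U0 (conj (proj1 (proj2 U0))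
    (conj (proj2 (proj2 U0)) (conj eq_refl _)))))).
  simpl. tauto.
Qed.

Lemma ladder_S k : ladder k ->
  (exists A, NoDup A /\ (forall x, In x A -> ray c0 x /\ la x = Wedge) /\
     (S (2 * k) <= length A)%nat) ->
  (exists B, NoDup B /\ (forall x, In x B -> ray c0 x /\ la x = Vee) /\
     (S (2 * k) <= length B)%nat) ->
  ladder (S k).
Proof.
  intros [mu [c [L [Wmu [Smu [U [Ho [Dg [LL Rc]]]]]]]]] [A [NDA [HA LA]]] [B [NDB [HB LB]]].
  destruct (pigeonhole_Z A L NDA ltac:(lia)) as [a [Ha Na]].
  destruct (pigeonhole_Z B L NDB ltac:(lia)) as [b [Hb Nb]].
  destruct (HA a Ha) as [R0a Wa]. destruct (HB b Hb) as [R0b Vb].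
  assert (Ra : ray c a) by now apply Rc. assert (Rb : ray c b) by now apply Rc.
  assert (RayEq : forall x, ray c x -> mu x = la x)
    by (intros; apply (oriented_sim_ray_eq I c mu la); auto; apply U).
  assert (Lab : a < b).
  { destruct (Z.lt_total a b) as [Lt|[->|Gt]]; [auto|congruence|exfalso].
    destruct Ho as [_ [_ [_ Hro]]]. apply (Hro b a); auto. }
  destruct (exists_adjacent_pair (fun x => ray c x /\ mu x = Wedge) (fun x => ray c x /\ mu x = Vee)
    a b Lab (conj Ra (eq_trans (RayEq a Ra) Wa)) (conj Rb (eq_trans (RayEq b Rb) Vb)))
    as [r [s [Lrs [[Rr Mr] [[Rs Ms] Hbt]]]]].
  assert (Nbt : forall t, r < t < s -> ~ ray c t).
  { intros t Ht Rt. destruct (Hbt t Ht). destruct U as [_ [[_ [_ [Hrv _]]] _]].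
    destruct (Hrv t Rt); tauto. }
  destruct (underline_close_ray_pair I la mu c r s Wmu Smu U Ho Rr Rs Lrs Mr Ms Nbt)
    as [Wmu' [Smu' [U' [Ho' Dg']]]].
  exists (swap_labels r s mu), (add_cup c r s), (r :: s :: L).
  repeat (split; [assumption|]). split; [lia|]. split; [simpl; lia|].
  intros x. cbn [ray add_cup In]. rewrite Rc. intuition congruence.
Qed.

End Ladder.

(* The ladder gives weights below [la] of every degree, while a weight in [l]
   has degree at most its defect. *)
Lemma block_defect_finite_of_finite_below I la : is_weight I la ->
  finite_set (fun mu => is_weight I mu /\ subw I mu la) -> block_defect_finite I la.
Proof.
  intros Hw [l Hl]. apply NNPP; intro Hnb. destruct (exists_underline I la Hw) as [c0 U0].
  assert (Many : forall v, is_vw v -> forall n, exists L, NoDup L /\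
    (forall x, In x L -> ray c0 x /\ la x = v) /\ (n <= length L)%nat).
  { intros v Hv n. apply NNPP; intro N. apply Hnb.
    apply (block_defect_finite_of_few_rays I la c0 v n U0 Hv).
    intros L ND HL. apply Nat.nle_gt. intros Hn. apply N. eauto. }
  assert (Hlad : forall k, ladder I la c0 k).
  { induction k; [now apply ladder_0|]. apply ladder_S; auto; apply Many; red; auto. }
  set (k := S (list_max (map (defect I) l))).
  destruct (Hlad k) as [mu [c [L [Wm [Smu [U [Ho [Dg _]]]]]]]].
  assert (Hin : In (defect I mu) (map (defect I) l)).
  { apply in_map, Hl. split; [auto|split; [auto|exists c; auto]]. }
  assert (Hmax := proj1 (Forall_forall _ _) (proj1 (list_max_le _ _) (le_n _)) _ Hin).
  rewrite (defect_underline I mu c U) in Hmax. assert (Hdeg := degree_le_cups c la).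
  unfold k in Dg. lia.
Qed.

Theorem lemma2p4 (I : Z -> Prop) (HI : number_line I)
  (la : Z -> lab) (Hla : is_weight I la) :
  has_card (fun mu => is_weight I mu /\ subw I la mu) (2 ^ defect I la)%nat /\
  (finite_set (fun mu => is_weight I mu /\ subw I mu la) <->
   block_defect_finite I la) /\
  (forall j : Z,
     finite_set (fun mu => is_weight I mu /\ sim mu la /\
       exists c, is_underline I mu c /\ oriented c la /\
                 Z.of_nat (degree c la) = j)).
Proof.
  split; [|split].
  - now apply card_weights_above.
  - split; [now apply block_defect_finite_of_finite_below|now apply finite_weights_below].
  - intros j. now apply finite_weights_below_of_degree.
Qed.
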